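(* Let $S$ be a quasi-adequate semigroup with an admissible adequate transversal $S^0$. Then for all $x,y\in S$, $e_{xy}=e_x\,e_{\overline{x}f_xe_y\overline{y}}$ and $f_{xy}=f_{\overline{x}f_xe_y\overline{y}}\,f_y$.
   Context: For a semigroup $S$, $S^1$ is $S$ with an identity adjoined, $\mathcal{L},\mathcal{R}$ Green's relations. $\mathcal{R}^\ast=\{(a,b):\forall x,y\in S^1,\ xa=ya\iff xb=yb\}$, $\mathcal{L}^\ast=\{(a,b):\forall x,y\in S^1,\ ax=ay\iff bx=by\}$. $S$ is abundant if each $\mathcal{R}^\ast$- and $\mathcal{L}^\ast$-class contains an idempotent; adequate if also idempotents commute (then $a^+$, $a^\ast$ are the unique idempotents $\mathcal{R}^\ast$-, resp. $\mathcal{L}^\ast$-related to $a$). Quasi-adequate: abundant with the idempotents forming a subsemigroup. An abundant subsemigroup $U$ of abundant $S$ is a $\ast$-subsemigroup if $\mathcal{L}^\ast(U)=\mathcal{L}^\ast(S)\cap(U\times U)$, $\mathcal{R}^\ast(U)=\mathcal{R}^\ast(S)\cap(U\times U)$. An adequate $\ast$-subsemigroup $S^0$ of abundant $S$ is an adequate transversal if each $x\in S$ has a unique $\overline{x}\in S^0$ and idempotents $e,f$ of $S$ with $x=e\overline{x}f$, $e\,\mathcal{L}\,\overline{x}^+$, $f\,\mathcal{R}\,\overline{x}^\ast$; these are unique and written $e_x:=e$, $f_x:=f$. It is admissible if $\overline{xy}=\overline{x}\,\overline{y}$ for all $x,y\in S$. *)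

Set Implicit Arguments.

Section Semigroups.
Variable S : Type.
Variable mul : S -> S -> S.

(* S^1 is modelled as option S, None being the adjoined identity. *)
Definition lmul (o : option S) (a : S) : S :=
  match o with None => a | Some x => mul x a end.
Definition rmul (a : S) (o : option S) : S :=
  match o with None => a | Some x => mul a x end.

Definition in1 (U : S -> Prop) (o : option S) : Prop :=
  match o with None => True | Some u => U u end.

Definition idempotent (e : S) : Prop := mul e e = e.

Definition Lrel (a b : S) : Prop :=
  exists u v : option S, a = lmul u b /\ b = lmul v a.
Definition Rrel (a b : S) : Prop :=
  exists u v : option S, a = rmul b u /\ b = rmul a v.

Definition RstarIn (U : S -> Prop) (a b : S) : Prop :=
  forall x y : option S, in1 U x -> in1 U y ->
    (lmul x a = lmul y a <-> lmul x b = lmul y b).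
Definition LstarIn (U : S -> Prop) (a b : S) : Prop :=
  forall x y : option S, in1 U x -> in1 U y ->
    (rmul a x = rmul a y <-> rmul b x = rmul b y).

Definition full : S -> Prop := fun _ => True.
Definition Rstar := RstarIn full.
Definition Lstar := LstarIn full.

Definition subsemigroup (U : S -> Prop) : Prop :=
  forall a b, U a -> U b -> U (mul a b).

Definition abundantIn (U : S -> Prop) : Prop :=
  forall a, U a ->
    (exists e, U e /\ idempotent e /\ RstarIn U a e) /\
    (exists f, U f /\ idempotent f /\ LstarIn U a f).

Definition abundant : Prop := abundantIn full.

Definition quasi_adequate : Prop :=
  abundant /\ (forall e f, idempotent e -> idempotent f -> idempotent (mul e f)).

Definition adequateIn (U : S -> Prop) : Prop :=
  abundantIn U /\
  (forall e f, U e -> U f -> idempotent e -> idempotent f -> mul e f = mul f e).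

Definition star_subsemigroup (U : S -> Prop) : Prop :=
  subsemigroup U /\ abundantIn U /\
  (forall a b, U a -> U b ->
     (LstarIn U a b <-> Lstar a b) /\ (RstarIn U a b <-> Rstar a b)).

Definition is_plus (S0 : S -> Prop) (a p : S) : Prop :=
  S0 p /\ idempotent p /\ RstarIn S0 a p.
Definition is_star (S0 : S -> Prop) (a q : S) : Prop :=
  S0 q /\ idempotent q /\ LstarIn S0 a q.

(* xb = x-bar, e = e_x, f = f_x *)
Definition transversal_triple (S0 : S -> Prop) (x xb e f : S) : Prop :=
  S0 xb /\ idempotent e /\ idempotent f /\ x = mul (mul e xb) f /\
  (exists p, is_plus S0 xb p /\ Lrel e p) /\
  (exists q, is_star S0 xb q /\ Rrel f q).

Definition adequate_transversal (S0 : S -> Prop) : Prop :=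
  adequateIn S0 /\ star_subsemigroup S0 /\
  forall x, exists xb e f, transversal_triple S0 x xb e f /\
    (forall xb' e' f', transversal_triple S0 x xb' e' f' ->
        xb' = xb /\ e' = e /\ f' = f).

End Semigroups.

Arguments full {S} _.

(* Put w := xbar f_x e_y ybar.  Admissibility and commutation of the
   idempotents of S0 force bar f_x = xbar^* and bar e_y = ybar^+, so that
   bar w = xbar ybar.  Writing w = e_w (xbar ybar) f_w gives
   xy = e_x w f_y = (e_x e_w) (xbar ybar) (f_w f_y); the two outer factors are
   idempotents (quasi-adequacy) L-, resp. R-related to (xbar ybar)^+ and
   (xbar ybar)^*, so uniqueness of the decomposition of xy yields the claim. *)
From Stdlib Require Import Setoid.
Set Implicit Arguments.
Unset Strict Implicit.

Section Green.
Variable S : Type.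
Variable mul : S -> S -> S.
Hypothesis Hassoc : forall a b c, mul a (mul b c) = mul (mul a b) c.

Lemma Lrel_idem_r a b : Lrel mul a b -> idempotent mul b -> mul a b = a.
Proof.
intros [[u|] [v [Ha _]]] Hb; simpl in Ha; subst a; [|exact Hb].
rewrite <- Hassoc, Hb; reflexivity.
Qed.

Lemma Lrel_idem_l a b : Lrel mul a b -> idempotent mul a -> mul b a = b.
Proof.
intros [u [[v|] [_ Hb]]] Ha; simpl in Hb; subst b; [|exact Ha].
rewrite <- Hassoc, Ha; reflexivity.
Qed.

Lemma Rrel_idem_l a b : Rrel mul a b -> idempotent mul b -> mul b a = a.
Proof.
intros [[u|] [v [Ha _]]] Hb; simpl in Ha; subst a; [|exact Hb].
rewrite Hassoc, Hb; reflexivity.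
Qed.

Lemma Rrel_idem_r a b : Rrel mul a b -> idempotent mul a -> mul a b = b.
Proof.
intros [u [[v|] [_ Hb]]] Ha; simpl in Hb; subst b; [|exact Ha].
rewrite Hassoc, Ha; reflexivity.
Qed.

Lemma Lrel_intro a b : mul a b = a -> mul b a = b -> Lrel mul a b.
Proof. intros Hab Hba; exists (Some a), (Some b); simpl; auto. Qed.

Lemma Rrel_intro a b : mul b a = a -> mul a b = b -> Rrel mul a b.
Proof. intros Hba Hab; exists (Some a), (Some b); simpl; auto. Qed.

Lemma Lrel_mull e p g :
  idempotent mul e -> idempotent mul p -> Lrel mul e p -> mul p g = p ->
  Lrel mul (mul g e) p.
Proof.
intros He Hp Hep Hpg; apply Lrel_intro.
- rewrite <- Hassoc, (Lrel_idem_r Hep Hp); reflexivity.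
- rewrite Hassoc, Hpg; exact (Lrel_idem_l Hep He).
Qed.

Lemma Rrel_mulr f q g :
  idempotent mul f -> idempotent mul q -> Rrel mul f q -> mul g q = q ->
  Rrel mul (mul f g) q.
Proof.
intros Hf Hq Hfq Hgq; apply Rrel_intro.
- rewrite Hassoc, (Rrel_idem_l Hfq Hq); reflexivity.
- rewrite <- Hassoc, Hgq; exact (Rrel_idem_r Hfq Hf).
Qed.

Lemma is_plus_mull (U : S -> Prop) a p : is_plus mul U a p -> mul p a = a.
Proof. intros [Up [Ip Hp]]; exact (proj2 (Hp (Some p) None Up I) Ip). Qed.

Lemma is_star_mulr (U : S -> Prop) a q : is_star mul U a q -> mul a q = a.
Proof. intros [Uq [Iq Hq]]; exact (proj2 (Hq (Some q) None Uq I) Iq). Qed.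

Lemma RstarIn_left_identity (U : S -> Prop) a p r :
  RstarIn mul U a p -> U r -> mul r a = a -> mul r p = p.
Proof. intros Hp Ur; exact (proj1 (Hp (Some r) None Ur I)). Qed.

Lemma LstarIn_right_identity (U : S -> Prop) a q s :
  LstarIn mul U a q -> U s -> mul a s = a -> mul q s = q.
Proof. intros Hq Us; exact (proj1 (Hq (Some s) None Us I)). Qed.

Lemma mul_regroup e a f e' b f' E c F :
  mul (mul (mul a f) e') b = mul (mul E c) F ->
  mul (mul (mul e a) f) (mul (mul e' b) f') = mul (mul (mul e E) c) (mul F f').
Proof.
intros H.
transitivity (mul (mul e (mul (mul (mul a f) e') b)) f'); [rewrite !Hassoc; reflexivity|].
rewrite H, !Hassoc; reflexivity.
Qed.

End Green.

Lemma adequate_transversal_unique S (mul : S -> S -> S) (S0 : S -> Prop)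
  x a e f a' e' f' :
  adequate_transversal mul S0 ->
  transversal_triple mul S0 x a e f -> transversal_triple mul S0 x a' e' f' ->
  a = a' /\ e = e' /\ f = f'.
Proof.
intros [_ [_ Huniq]] T T'.
destruct (Huniq x) as [a0 [e0 [f0 [_ U]]]].
destruct (U _ _ _ T) as [? [? ?]]; destruct (U _ _ _ T') as [? [? ?]].
repeat split; congruence.
Qed.

Section AdmissibleTransversal.
Variable S : Type.
Variable mul : S -> S -> S.
Hypothesis Hassoc : forall a b c, mul a (mul b c) = mul (mul a b) c.
Variable S0 : S -> Prop.
Hypothesis HS0 : adequate_transversal mul S0.
Variables bar ex fx : S -> S.
Hypothesis Hbar : forall x, transversal_triple mul S0 x (bar x) (ex x) (fx x).
Hypothesis Hadm : forall x y, bar (mul x y) = mul (bar x) (bar y).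

Lemma triple_eq_bar x a e f :
  transversal_triple mul S0 x a e f -> a = bar x /\ e = ex x /\ f = fx x.
Proof. intros T; exact (adequate_transversal_unique HS0 T (Hbar x)). Qed.

Lemma idem_comm_S0 e f :
  S0 e -> S0 f -> idempotent mul e -> idempotent mul f -> mul e f = mul f e.
Proof. destruct HS0 as [[_ Hcomm] _]; exact (Hcomm e f). Qed.

Lemma bar_S0 s : S0 s -> bar s = s.
Proof.
intros Ss.
destruct HS0 as [[Hab _] _].
destruct (Hab s Ss) as [[e [Se [Ie Re]]] [f [Sf [If Lf]]]].
assert (Pe : is_plus mul S0 s e) by exact (conj Se (conj Ie Re)).
assert (Qf : is_star mul S0 s f) by exact (conj Sf (conj If Lf)).
assert (T : transversal_triple mul S0 s s e f).
{ refine (conj Ss (conj Ie (conj If (conj _ (conj _ _))))).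
  - rewrite (is_plus_mull Pe), (is_star_mulr Qf); reflexivity.
  - exists e; split; [exact Pe | exact (Lrel_intro Ie Ie)].
  - exists f; split; [exact Qf | exact (Rrel_intro If If)]. }
symmetry; exact (proj1 (triple_eq_bar T)).
Qed.

Lemma bar_idempotent e : idempotent mul e -> idempotent mul (bar e).
Proof. unfold idempotent; intros He; rewrite <- Hadm, He; reflexivity. Qed.

(* In both lemmas bar f and q are commuting idempotents of S0 that each
   absorb the other on one side, hence are equal. *)
Lemma bar_Rrel_idem f q :
  idempotent mul f -> S0 q -> idempotent mul q -> Rrel mul f q -> bar f = q.
Proof.
intros If Sq Iq Hfq.
pose proof (Hbar f) as [Sbf _].
assert (Hqbf : mul q (bar f) = bar f).
{ rewrite <- (bar_S0 Sq) at 1; rewrite <- Hadm, (Rrel_idem_l Hassoc Hfq Iq); reflexivity. }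
assert (Hbfq : mul (bar f) q = q).
{ rewrite <- (bar_S0 Sq) at 1; rewrite <- Hadm, (Rrel_idem_r Hassoc Hfq If), (bar_S0 Sq).
  reflexivity. }
rewrite <- Hqbf, (idem_comm_S0 Sq Sbf Iq (bar_idempotent If)); exact Hbfq.
Qed.

Lemma bar_Lrel_idem e p :
  idempotent mul e -> S0 p -> idempotent mul p -> Lrel mul e p -> bar e = p.
Proof.
intros Ie Sp Ip Hep.
pose proof (Hbar e) as [Sbe _].
assert (Hbep : mul (bar e) p = bar e).
{ rewrite <- (bar_S0 Sp) at 1; rewrite <- Hadm, (Lrel_idem_r Hassoc Hep Ip); reflexivity. }
assert (Hpbe : mul p (bar e) = p).
{ rewrite <- (bar_S0 Sp) at 1; rewrite <- Hadm, (Lrel_idem_l Hassoc Hep Ie), (bar_S0 Sp).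
  reflexivity. }
rewrite <- Hbep, (idem_comm_S0 Sbe Sp (bar_idempotent Ie) Ip); exact Hpbe.
Qed.

Lemma bar_sandwich x y :
  bar (mul (mul (mul (bar x) (fx x)) (ex y)) (bar y)) = mul (bar x) (bar y).
Proof.
destruct (Hbar x) as [Sx [_ [Ifx [_ [_ [q [Qq Rq]]]]]]].
destruct (Hbar y) as [Sy [Iey [_ [_ [[p [Pp Lp]] _]]]]].
rewrite !Hadm, (bar_S0 Sx), (bar_S0 Sy).
destruct Qq as [Sq [Iq Lq]]; destruct Pp as [Sp [Ip Rp]].
rewrite (bar_Rrel_idem Ifx Sq Iq Rq), (bar_Lrel_idem Iey Sp Ip Lp).
rewrite (is_star_mulr (conj Sq (conj Iq Lq))), <- Hassoc.
rewrite (is_plus_mull (conj Sp (conj Ip Rp))); reflexivity.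
Qed.

(* p absorbs e_x through xbar^+, which lies above p since it fixes xbar b. *)
Lemma is_plus_mul_ex x b p : is_plus mul S0 (mul (bar x) b) p -> mul p (ex x) = p.
Proof.
intros [Sp [Ip Rp]].
destruct (Hbar x) as [_ [Iex [_ [_ [[r [Pr Lr]] _]]]]].
pose proof Pr as [Sr [Ir _]].
assert (Hrp : mul r p = p).
{ apply (RstarIn_left_identity Rp Sr); rewrite Hassoc, (is_plus_mull Pr); reflexivity. }
rewrite <- Hrp at 1; rewrite (idem_comm_S0 Sr Sp Ir Ip), <- Hassoc.
rewrite (Lrel_idem_l Hassoc Lr Iex), (idem_comm_S0 Sp Sr Ip Ir); exact Hrp.
Qed.

Lemma is_star_mul_fx a y q : is_star mul S0 (mul a (bar y)) q -> mul (fx y) q = q.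
Proof.
intros [Sq [Iq Lq]].
destruct (Hbar y) as [_ [_ [Ify [_ [_ [s [Qs Rs]]]]]]].
pose proof Qs as [Ss [Is _]].
assert (Hqs : mul q s = q).
{ apply (LstarIn_right_identity Lq Ss); rewrite <- Hassoc, (is_star_mulr Qs); reflexivity. }
rewrite <- Hqs at 1; rewrite (idem_comm_S0 Sq Ss Iq Is), Hassoc.
rewrite (Rrel_idem_r Hassoc Rs Ify), <- (idem_comm_S0 Sq Ss Iq Is); exact Hqs.
Qed.

Hypothesis Hidem_mul :
  forall e f, idempotent mul e -> idempotent mul f -> idempotent mul (mul e f).

Lemma transversal_triple_mul x y
  (w := mul (mul (mul (bar x) (fx x)) (ex y)) (bar y)) :
  transversal_triple mul S0 (mul x y) (mul (bar x) (bar y))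
    (mul (ex x) (ex w)) (mul (fx w) (fx y)).
Proof.
destruct (Hbar x) as [_ [Iex [Ifx [Ex _]]]].
destruct (Hbar y) as [_ [Iey [Ify [Ey _]]]].
destruct (Hbar w) as [Sw [Iew [Ifw [Ew [[p [Pp Lp]] [q [Qq Rq]]]]]]].
unfold w in Sw, Ew, Pp, Qq; rewrite bar_sandwich in Sw, Ew, Pp, Qq; fold w in Ew.
pose proof Pp as [_ [Ip _]]; pose proof Qq as [_ [Iq _]].
repeat split; auto.
- pose proof (mul_regroup Hassoc (ex x) (fx y) Ew) as Hxy.
  rewrite <- Ex, <- Ey in Hxy; exact Hxy.
- exists p; split; [exact Pp|].
  exact (Lrel_mull Hassoc Iew Ip Lp (is_plus_mul_ex Pp)).
- exists q; split; [exact Qq|].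
  exact (Rrel_mulr Hassoc Ifw Iq Rq (is_star_mul_fx Qq)).
Qed.

End AdmissibleTransversal.

Theorem theorem2p13 (S : Type) (mul : S -> S -> S)
  (Hassoc : forall a b c, mul a (mul b c) = mul (mul a b) c)
  (HQA : quasi_adequate mul)
  (S0 : S -> Prop) (HS0 : adequate_transversal mul S0)
  (bar ex fx : S -> S)
  (Hbar : forall x, transversal_triple mul S0 x (bar x) (ex x) (fx x))
  (Hadm : forall x y, bar (mul x y) = mul (bar x) (bar y)) :
  forall x y : S,
    ex (mul x y) = mul (ex x) (ex (mul (mul (mul (bar x) (fx x)) (ex y)) (bar y))) /\
    fx (mul x y) = mul (fx (mul (mul (mul (bar x) (fx x)) (ex y)) (bar y))) (fx y).
Proof.
intros x y.
destruct HQA as [_ Hidem_mul].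
pose proof (transversal_triple_mul Hassoc HS0 Hbar Hadm Hidem_mul x y) as T.
destruct (triple_eq_bar HS0 Hbar T) as [_ [Hex Hfx]].
split; symmetry; assumption.
Qed.
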